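(* Let $P=\frac{1}{\sqrt2}\begin{bmatrix}1&1\\0&0\end{bmatrix}$ and $Q=\frac{1}{\sqrt2}\begin{bmatrix}0&0\\1&-1\end{bmatrix}$. For $\varphi=\begin{bmatrix}\alpha\\ \beta\end{bmatrix}\in\mathbb{C}^2$ with $|\alpha|^2+|\beta|^2=1$, define $\Psi^{(n)}_k(\varphi)\in\mathbb{C}^2$ ($n\in\mathbb{Z}_+$, $k\in\mathbb{Z}$) by $\Psi^{(0)}_0(\varphi)=\varphi$, $\Psi^{(0)}_k(\varphi)=0$ for $k\ne0$, and $\Psi^{(n+1)}_k(\varphi)=Q\Psi^{(n)}_{k-1}(\varphi)+P\Psi^{(n)}_{k+1}(\varphi)$, and let $X^\varphi_n$ be the $\mathbb{Z}$-valued random variable with $P(X^\varphi_n=k)=|\Psi^{(n)}_k(\varphi)|^2$ (Euclidean norm). Let $\Phi$ be the set of such unit vectors $\varphi$ and define $\Phi_\perp=\{\varphi=(\alpha,\beta)^t\in\Phi: |\alpha|=|\beta|,\ \alpha\bar\beta+\bar\alpha\beta=0\}$, $\Phi_s=\{\varphi\in\Phi: P(X^\varphi_n=k)=P(X^\varphi_n=-k)\text{ for all } n\in\mathbb{Z}_+,\ k\in\mathbb{Z}\}$, $\Phi_0=\{\varphi\in\Phi: E(X^\varphi_n)=0\text{ for all } n\in\mathbb{Z}_+\}$. Then $\Phi_\perp=\Phi_s=\Phi_0$.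
   Context: This is the one-dimensional Hadamard walk with Hadamard matrix $H=\frac{1}{\sqrt2}\begin{bmatrix}1&1\\1&-1\end{bmatrix}=P+Q$; the upper/lower component of $\Psi^{(n)}_k$ is the amplitude of left/right chirality at site $k$ at time $n$, and $\sum_k|\Psi^{(n)}_k(\varphi)|^2=1$. $\mathbb{Z}_+$ denotes the non-negative integers and $E(X^\varphi_n)=\sum_k k\,P(X^\varphi_n=k)$. (The paper realizes the walk on a large cycle of $2N+1$ sites; for the times considered this coincides with the walk on $\mathbb{Z}$.) *)

From HB Require Import structures.
From mathcomp Require Import all_boot all_order all_algebra.
From mathcomp Require Import complex.
From mathcomp Require Import reals.
Set Implicit Arguments. Unset Strict Implicit. Unset Printing Implicit Defensive.
Import Order.TTheory GRing.Theory Num.Theory.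
Local Open Scope ring_scope.
Local Open Scope complex_scope.

Section Hadamard.
Variable R : realType.
Notation C := (R[i]).

Definition isq2 : C := ((Num.sqrt (2%:R : R))^-1)%:C.

Definition Pmat : 'M[C]_2 :=
  \matrix_(i < 2, j < 2)
    (if i == 0 :> nat then isq2 else 0).
Definition Qmat : 'M[C]_2 :=
  \matrix_(i < 2, j < 2)
    (if i == 0 :> nat then 0
     else if j == 0 :> nat then isq2
          else - isq2).

Fixpoint Psi (n : nat) (phi : 'cV[C]_2) (k : int) : 'cV[C]_2 :=
  match n with
  | 0%N => if k == 0 then phi else 0
  | n'.+1 => Qmat *m Psi n' phi (k - 1) + Pmat *m Psi n' phi (k + 1)
  end.

Definition prob (phi : 'cV[C]_2) (n : nat) (k : int) : C :=
  `|Psi n phi k 0 0| ^+ 2 + `|Psi n phi k 1 0| ^+ 2.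

(* E(X^phi_n) = sum_k k P(X^phi_n = k); the sum is over k in [-n, n],
   outside of which Psi^(n)_k = 0. *)
Definition expect (phi : 'cV[C]_2) (n : nat) : C :=
  \sum_(i < (2 * n).+1) ((i%:Z - n%:Z)%:~R * prob phi n (i%:Z - n%:Z)).

Definition in_Phi (phi : 'cV[C]_2) : Prop :=
  `|phi 0 0| ^+ 2 + `|phi 1 0| ^+ 2 = 1.

Definition in_Phi_perp (phi : 'cV[C]_2) : Prop :=
  in_Phi phi /\ `|phi 0 0| = `|phi 1 0| /\
  phi 0 0 * (phi 1 0)^* + (phi 0 0)^* * phi 1 0 = 0.

Definition in_Phi_s (phi : 'cV[C]_2) : Prop :=
  in_Phi phi /\ forall (n : nat) (k : int), prob phi n k = prob phi n (- k).

Definition in_Phi_0 (phi : 'cV[C]_2) : Prop :=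
  in_Phi phi /\ forall n : nat, expect phi n = 0.

End Hadamard.

(* The rotation J = [[0, -1], [1, 0]] intertwines the walk with its mirror
   image: J P = - Q J and J Q = - P J, so Psi^(n)_k(J phi) = (-1)^n J
   Psi^(n)_(-k)(phi) and X^(J phi)_n has the law of - X^phi_n.  For a unit
   vector in Phi_perp one has alpha^2 = - beta^2, i.e. J phi is a unimodular
   multiple of phi, so the law of X^phi_n is symmetric, hence centred.
   Conversely, expanding the walk up to time 3 gives
   E(X_1) = - (alpha conj(beta) + conj(alpha) beta) and
   E(X_3) = (|beta|^2 - |alpha|^2) / 2 + E(X_1), whose vanishing is exactly the
   definition of Phi_perp. *)

From HB Require Import structures.
From mathcomp Require Import all_boot all_order all_algebra.
From mathcomp Require Import complex reals.
From mathcomp Require Import ring zify.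
Set Implicit Arguments. Unset Strict Implicit. Unset Printing Implicit Defensive.
Import Order.TTheory GRing.Theory Num.Theory.
Local Open Scope ring_scope.
Local Open Scope complex_scope.

Lemma sqr_normc_intcomb (R : rcfType) (x y : R[i]) (p q : int) :
  `|p%:~R * x + q%:~R * y| ^+ 2 =
  (p * p)%:~R * `|x| ^+ 2 + (q * q)%:~R * `|y| ^+ 2 + (p * q)%:~R * (x * y^* + x^* * y).
Proof. by rewrite !sqr_normc rmorphD !rmorphM !rmorph_int; ring. Qed.

Lemma eq_norm_orth_sqrE (R : rcfType) (a b : R[i]) :
  `|a| = `|b| -> a * b^* + a^* * b = 0 -> a ^+ 2 = - b ^+ 2.
Proof.
move=> nab orth; have [b0|b0] := eqVneq b 0.
  by move/eqP: nab; rewrite b0 normr0 normr_eq0 => /eqP ->; rewrite expr0n oppr0.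
have ab : a * b^* = - (a^* * b) by apply/eqP; rewrite -subr_eq0 opprK orth.
have bc0 : b^* != 0 by rewrite conjc_eq0.
apply: (mulIf bc0).
by rewrite mulNr !expr2 -mulrA ab mulrN mulrA -(sqr_normc a) nab sqr_normc; ring.
Qed.

Section HadamardWalk.
Variable R : realType.
Local Notation C := R[i].
Local Notation t := (isq2 R).

Lemma PsiZ n c (phi : 'cV[C]_2) k : Psi n (c *: phi) k = c *: Psi n phi k.
Proof.
elim: n k => [|n IHn] k /=; first by case: eqP => _; rewrite ?scaler0.
by rewrite !IHn scalerDr !scalemxAr.
Qed.

Definition Jmat : 'M[C]_2 :=
  \matrix_(i < 2, j < 2) (if i == j then 0 else if i == 0 then -1 else 1).

Ltac mx2_eval :=
  apply/matrixP => - [[|[|?]] ?] [[|[|?]] ?] //;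
  rewrite !mxE !big_ord_recl !big_ord0 !mxE /=; ring.

Lemma Jmat_Pmat : Jmat *m Pmat R = - (Qmat R *m Jmat).
Proof. by mx2_eval. Qed.

Lemma Jmat_Qmat : Jmat *m Qmat R = - (Pmat R *m Jmat).
Proof. by mx2_eval. Qed.

Lemma Psi_Jmat n (phi : 'cV[C]_2) k :
  Psi n (Jmat *m phi) k = (-1) ^+ n *: (Jmat *m Psi n phi (- k)).
Proof.
elim: n k => [|n IHn] k /=.
  by rewrite oppr_eq0 scale1r; case: eqP => _; rewrite ?mulmx0.
rewrite !IHn opprB opprD addrC mulmxDr !mulmxA Jmat_Pmat Jmat_Qmat !mulNmx -!mulmxA.
rewrite exprS mulN1r scaleNr -scalerN opprD !opprK scalerDr -!scalemxAr.
by rewrite [1 - k]addrC.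
Qed.

Lemma Jmat_col0 (v : 'cV[C]_2) : (Jmat *m v) 0 0 = - v 1 0.
Proof.
rewrite !mxE !big_ord_recl big_ord0 !mxE /= mul0r mulN1r add0r addr0.
by congr (- v _ _); apply: val_inj.
Qed.

Lemma Jmat_col1 (v : 'cV[C]_2) : (Jmat *m v) 1 0 = v 0 0.
Proof.
rewrite !mxE !big_ord_recl big_ord0 !mxE /= mul1r mul0r !addr0.
by congr (v _ _); apply: val_inj.
Qed.

Lemma cV2P (u v : 'cV[C]_2) : u 0 0 = v 0 0 -> u 1 0 = v 1 0 -> u = v.
Proof.
move=> eq0 eq1; apply/matrixP => -[[|[|i]] Hi] j //; rewrite ord1.
- by rewrite (_ : Ordinal Hi = 0) //; apply: val_inj.
- by rewrite (_ : Ordinal Hi = 1) //; apply: val_inj.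
Qed.

Lemma probZ c (phi : 'cV[C]_2) n k :
  prob (c *: phi) n k = `|c| ^+ 2 * prob phi n k.
Proof. by rewrite /prob PsiZ !mxE !normrM !exprMn mulrDr. Qed.

Lemma prob_Jmat (phi : 'cV[C]_2) n k : prob (Jmat *m phi) n k = prob phi n (- k).
Proof.
rewrite /prob Psi_Jmat [X in `|X| ^+ 2 + _]mxE [X in _ + `|X| ^+ 2]mxE.
rewrite Jmat_col0 Jmat_col1 !normrM normrX.
by rewrite normrN normr1 expr1n !mul1r normrN addrC.
Qed.

Lemma Phi_perp_Jmat_eigen (phi : 'cV[C]_2) :
  in_Phi_perp phi -> exists2 c : C, `|c| = 1 & Jmat *m phi = c *: phi.
Proof.
move=> [unit_phi [nab orth]]; rewrite /in_Phi in unit_phi.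
set a := phi 0 0 in unit_phi nab orth *; set b := phi 1 0 in unit_phi nab orth *.
have a0 : a != 0.
  apply/eqP => a0; move/eqP: unit_phi; rewrite -nab a0 normr0 expr0n add0r.
  by rewrite eq_sym oner_eq0.
exists (- b / a).
  by rewrite normrM normrN normrV ?unitfE // -nab divff // normr_eq0.
apply: cV2P; rewrite ?Jmat_col0 ?Jmat_col1 mxE -/a -/b; first by rewrite divfK.
apply: (mulIf a0).
by rewrite mulrAC divfK // mulNr -!expr2 (eq_norm_orth_sqrE nab orth).
Qed.

Lemma Phi_perp_sym (phi : 'cV[C]_2) n k :
  in_Phi_perp phi -> prob phi n k = prob phi n (- k).
Proof.
case/Phi_perp_Jmat_eigen => c c1 Jphi.
by rewrite -prob_Jmat Jphi probZ c1 expr1n mul1r.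
Qed.

Lemma expect_sym (phi : 'cV[C]_2) n :
  (forall k, prob phi n k = prob phi n (- k)) -> expect phi n = 0.
Proof.
move=> sym; set E := expect phi n.
have E_opp : E = - E.
  rewrite {1}/E /expect (reindex_inj rev_ord_inj) /= -sumrN.
  apply: eq_bigr => i _.
  have -> : ((2 * n).+1 - i.+1)%N%:Z - n%:Z = - (i%:Z - n%:Z).
    by have := ltn_ord i; lia.
  by rewrite -sym mulrNz mulNr.
have : E *+ 2 = 0 by rewrite mulr2n {1}E_opp addNr.
by move/eqP; rewrite -mulr_natr mulf_eq0 pnatr_eq0 orbF => /eqP.
Qed.

Lemma Psi0E (phi : 'cV[C]_2) k i : Psi 0 phi k i 0 = if k == 0 then phi i 0 else 0.
Proof. by rewrite /=; case: eqP; rewrite ?mxE. Qed.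

Lemma PsiS0E n (phi : 'cV[C]_2) k :
  Psi n.+1 phi k 0 0 = t * (Psi n phi (k + 1) 0 0 + Psi n phi (k + 1) 1 0).
Proof.
rewrite /= !mxE !big_ord_recl !big_ord0 !mxE /= !mul0r !addr0 ?add0r mulrDr.
by congr (_ * Psi n phi (k + 1) _ _ + _ * Psi n phi (k + 1) _ _); apply: val_inj.
Qed.

Lemma PsiS1E n (phi : 'cV[C]_2) k :
  Psi n.+1 phi k 1 0 = t * (Psi n phi (k - 1) 0 0 - Psi n phi (k - 1) 1 0).
Proof.
rewrite /= !mxE !big_ord_recl !big_ord0 !mxE /= !mul0r !addr0 ?add0r mulrBr mulNr.
by congr (_ * Psi n phi (k - 1) _ _ - _ * Psi n phi (k - 1) _ _); apply: val_inj.
Qed.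

(* walk_coef n k = ((p, q), (r, s)) is the integer matrix with
   Psi n phi k = isq2 ^+ n *: [[p, q], [r, s]] *m phi; being computable, it
   lets the expectations at small times be evaluated by vm_compute. *)
Fixpoint walk_coef (n : nat) (k : int) : (int * int) * (int * int) :=
  match n with
  | 0%N => if k == 0 then ((1, 0), (0, 1)) else ((0, 0), (0, 0))
  | n'.+1 =>
    let r := walk_coef n' (k + 1) in let s := walk_coef n' (k - 1) in
    ((r.1.1 + r.2.1, r.1.2 + r.2.2), (s.1.1 - s.2.1, s.1.2 - s.2.2))
  end.

Lemma Psi_walk_coef (phi : 'cV[C]_2) n k :
  let: ((p, q), (r, s)) := walk_coef n k in
  Psi n phi k 0 0 = t ^+ n * (p%:~R * phi 0 0 + q%:~R * phi 1 0) /\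
  Psi n phi k 1 0 = t ^+ n * (r%:~R * phi 0 0 + s%:~R * phi 1 0).
Proof.
elim: n k => [|n IHn] k.
  by rewrite /= !Psi0E; case: eqP => _ /=; split; ring.
rewrite /= PsiS0E PsiS1E.
move: (IHn (k + 1)) (IHn (k - 1)).
case: (walk_coef n (k + 1)) => [[p q] [r s]] [-> ->].
case: (walk_coef n (k - 1)) => [[p' q'] [r' s']] [-> ->] /=.
by rewrite exprS !intrD !intrN; split; ring.
Qed.

Lemma sqr_norm_isq2 : `|t| ^+ 2 = 2^-1.
Proof.
rewrite sqr_normc /isq2 conjc_real -rmorphM -expr2 exprVn sqr_sqrtr ?ler0n //.
by rewrite fmorphV rmorph_nat.
Qed.

Lemma prob_walk_coef (phi : 'cV[C]_2) n k :
  prob phi n k = 2^-1 ^+ n *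
    (`|(walk_coef n k).1.1%:~R * phi 0 0 + (walk_coef n k).1.2%:~R * phi 1 0| ^+ 2 +
     `|(walk_coef n k).2.1%:~R * phi 0 0 + (walk_coef n k).2.2%:~R * phi 1 0| ^+ 2).
Proof.
rewrite /prob; move: (Psi_walk_coef phi n k).
case: walk_coef => -[p q] [r s] /= [-> ->].
by rewrite !normrM normrX !exprMn -exprM mulnC exprM sqr_norm_isq2 mulrDr.
Qed.

Ltac eval_walk_coef :=
  repeat match goal with |- context [walk_coef ?n ?k] =>
    let w := eval vm_compute in (walk_coef n k) in change (walk_coef n k) with w
  end.

Lemma expect1E (phi : 'cV[C]_2) :
  expect phi 1 = - (phi 0 0 * (phi 1 0)^* + (phi 0 0)^* * phi 1 0).
Proof.
rewrite /expect !big_ord_recr big_ord0 /= !prob_walk_coef; eval_walk_coef.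
by rewrite /= !sqr_normc_intcomb; field.
Qed.

Lemma expect3E (phi : 'cV[C]_2) :
  expect phi 3 = (`|phi 1 0| ^+ 2 - `|phi 0 0| ^+ 2) / 2 + expect phi 1.
Proof.
rewrite expect1E /expect !big_ord_recr big_ord0 /= !prob_walk_coef; eval_walk_coef.
by rewrite /= !sqr_normc_intcomb; field.
Qed.

Lemma Phi_0_perp (phi : 'cV[C]_2) : in_Phi_0 phi -> in_Phi_perp phi.
Proof.
move=> [unit_phi mean0]; have E1 := mean0 1%N; have E3 := mean0 3%N.
rewrite expect3E E1 addr0 in E3; rewrite expect1E in E1.
split=> //; split; last by apply/eqP; rewrite -oppr_eq0 E1.
apply/eqP; rewrite -(eqrXn2 (_ : 0 < 2)%N) ?normr_ge0 // eq_sym -subr_eq0.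
by move/eqP: E3; rewrite mulf_eq0 invr_eq0 pnatr_eq0 orbF.
Qed.

End HadamardWalk.

Theorem theorem2 (R : realType) (phi : 'cV[R[i]]_2) :
  (in_Phi_perp phi <-> in_Phi_s phi) /\ (in_Phi_s phi <-> in_Phi_0 phi).
Proof.
have perp_s : in_Phi_perp phi -> in_Phi_s phi.
  by move=> perp; split=> [|n k]; [case: perp | exact: Phi_perp_sym].
have s_0 : in_Phi_s phi -> in_Phi_0 phi.
  by case=> unit_phi sym; split=> // n; apply: expect_sym.
split; split.
- exact: perp_s.
- by move/s_0/Phi_0_perp.
- exact: s_0.
- by move/Phi_0_perp/perp_s.
Qed.
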